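(* Let $0<\bar\varepsilon<\varrho<\frac12$, let $H$ be a special atom, and let $\rho^-,\rho^+:\mathbb{R}^2\to[0,1]$ be CPwL maps such that \[ \rho^-(E(t))=t\ \text{ for } t\in[\bar\varepsilon,1],\qquad \rho^+(E(t))=t\ \text{ for } t\in[0,1-\bar\varepsilon]. \] For $\sigma,\tau\in\{-,+\}$ let $\rho^{\sigma,\tau}(z_1,z_2)=(\rho^\sigma(z_1),\rho^\tau(z_2))$ for $z_1,z_2\in\mathbb{R}^2$. Let $F$ be a CPwL map with $F(E(t))=E(r(t))$ on $[0,1]$ and let $z_n(x,y)=\bigl(F^n(E(x)),F^n(E(y))\bigr)$. Then for every $n\ge1$ and every $(x,y)\in[0,1]^2$, \[ H(R_n(x,y))=\min_{\sigma,\tau\in\{-,+\}} H\bigl(\rho^{\sigma,\tau}(z_n(x,y))\bigr). \] Consequently there exist constants $C_0,C_1>0$, independent of $n$ (depending only on $\bar\varepsilon,\varrho$, the maps $\rho^\pm,F,E$ and the local complexity of $H$), such that the function $(x,y)\mapsto H(R_n(x,y))$ on $[0,1]^2$ is the restriction of a network in $\Upsilon_{C_0,\,C_1 n}(\mathrm{ReLU};2,1)$ for all $n\ge1$.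
   Context: For integers $W,L,d,N\ge 1$, $\Upsilon_{W,L}(\mathrm{ReLU};d,N)$ denotes the set of functions $\mathbb{R}^d\to\mathbb{R}^N$ realized (exactly) by fully connected feed-forward ReLU networks of width $W$ and depth $L$. CPwL means continuous piecewise linear. $r:[0,1]\to[0,1]$ is $r(t)=2t-\lfloor 2t\rfloor$ for $t\in[0,1)$, $r(1)=1$; $R(x,y)=(r(x),r(y))$, $R_n=R^n$. $E:[0,1]\to\mathbb{R}^2$ is $E(t)=(3t,3t)$ for $0\le t\le\frac13$, $E(t)=(1,2-3t)$ for $\frac13\le t\le\frac23$, $E(t)=(3-3t,0)$ for $\frac23\le t\le1$. Special atom: for fixed $0<\varrho<\frac12$, a special atom is a compactly supported nonnegative CPwL function $H:\mathbb{R}^2\to[0,\infty)$ with $\operatorname{supp}H\subset[\varrho,1-\varrho]^2$. *)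

From HB Require Import structures.
From mathcomp Require Import all_boot all_order all_algebra.
From mathcomp Require Import all_classical all_reals all_analysis.
Set Implicit Arguments. Unset Strict Implicit. Unset Printing Implicit Defensive.
Import Order.TTheory GRing.Theory Num.Theory.
Import numFieldNormedType.Exports.
Local Open Scope classical_set_scope.
Local Open Scope ring_scope.

Section Defs.
Variable R : realType.

Definition vec2 (a b : R) : 'cV[R]_2 := \col_(i < 2) (if i == ord0 then a else b).

Definition cpwl (d : nat) (f : 'cV[R]_d -> R) : Prop :=
  continuous (f : 'cV[R]_d -> R) /\
  exists s : seq ('rV[R]_d * R),
    forall x, exists2 p, p \in s & f x = (p.1 *m x) ord0 ord0 + p.2.

Definition cpwl_vec (d N : nat) (f : 'cV[R]_d -> 'cV[R]_N) : Prop :=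
  forall i : 'I_N, cpwl (fun x => f x i ord0).

Definition relu_vec (m : nat) (v : 'cV[R]_m) : 'cV[R]_m :=
  map_mx (fun t => Num.max t 0) v.

(* Upsilon_{W,L}(ReLU; d, N): maps realized by a fully connected ReLU network with
   L >= 1 hidden layers, each of width W:
   x |-> Aout (relu (A_{L-1} ... relu (A_1 (relu (A_0 x + b_0)) + b_1) ...)) + bout *)
Definition relu_net (W L d N : nat) (f : 'cV[R]_d -> 'cV[R]_N) : Prop :=
  (0 < L)%N /\
  exists (A0 : 'M[R]_(W, d)) (b0 : 'cV[R]_W)
         (hid : seq ('M[R]_(W, W) * 'cV[R]_W))
         (Aout : 'M[R]_(N, W)) (bout : 'cV[R]_N),
    size hid = L.-1 /\
    forall x, f x = Aout *m (foldl (fun h p => relu_vec (p.1 *m h + p.2))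
                                   (relu_vec (A0 *m x + b0)) hid) + bout.

Definition rmap (t : R) : R :=
  if t == 1 then 1 else 2 * t - (Num.floor (2 * t))%:~R.

Definition Emap (t : R) : 'cV[R]_2 :=
  if t <= 3^-1 then vec2 (3 * t) (3 * t)
  else if t <= 2 / 3 then vec2 1 (2 - 3 * t)
  else vec2 (3 - 3 * t) 0.

Definition special_atom (varrho : R) (H : 'cV[R]_2 -> R) : Prop :=
  cpwl H /\ (forall z, 0 <= H z) /\
  compact (closure [set z | H z != 0]) /\
  closure [set z | H z != 0] `<=`
    [set z | varrho <= z ord0 ord0 <= 1 - varrho /\
             varrho <= z (lift ord0 ord0) ord0 <= 1 - varrho].

End Defs.

(* Since rho^- inverts E away from 0 and rho^+ away from 1, at every t in [0,1] one of
   them returns t, and where only one does, t is within epsb < varrho of the boundary,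
   hence outside the support of H.  As H >= 0 and F^n o E = E o r^n, the minimum of H over
   the four candidates is H(R_n(x,y)).  For the network: a CPwL function is the maximum of
   minima of its affine pieces (along any segment some piece lies above the function at one
   end and below it at the other), so it is ReLU-realizable; stacking n copies of a fixed
   network for F between fixed networks for E and for the readout gives width independent
   of n and depth linear in n. *)

From HB Require Import structures.
From mathcomp Require Import all_boot all_order all_algebra.
From mathcomp Require Import all_classical all_reals all_analysis.
From mathcomp Require Import ring lra zify.
Set Implicit Arguments. Unset Strict Implicit. Unset Printing Implicit Defensive.
Import Order.TTheory GRing.Theory Num.Theory.
Import numFieldNormedType.Exports.
Local Open Scope classical_set_scope.
Local Open Scope ring_scope.

Section ReluNetworks.
Variable R : realType.

Local Notation layer := (fun h p => relu_vec (p.1 *m h + p.2)).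

Lemma relu_vec_col_mx m k (a : 'cV[R]_m) (b : 'cV[R]_k) :
  relu_vec (col_mx a b) = col_mx (relu_vec a) (relu_vec b).
Proof. exact: map_col_mx. Qed.

Lemma relu_vec_pid_mx W W' (v : 'cV[R]_W) :
  relu_vec ((pid_mx W : 'M[R]_(W', W)) *m v) = pid_mx W *m relu_vec v.
Proof.
apply/matrixP => i j; rewrite !mxE.
case: (ltnP i W) => iW.
  have pidE (g : 'I_W -> R) :
      \sum_k (pid_mx W : 'M[R]_(W', W)) i k * g k = g (Ordinal iW).
    rewrite (bigD1 (Ordinal iW)) //= big1 => [|k ki]; first by rewrite mxE eqxx iW mul1r addr0.
    rewrite mxE; case: eqP => [ik|]; last by rewrite mul0r.
    by move: ki; rewrite -(inj_eq val_inj) /= -ik eqxx.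
  by rewrite !pidE mxE.
have pidE (g : 'I_W -> R) : \sum_k (pid_mx W : 'M[R]_(W', W)) i k * g k = 0.
  by apply: big1 => k _; rewrite mxE (leq_gtF iW) andbF mul0r.
by rewrite !pidE maxxx.
Qed.

Lemma relu_vec_sub m (x : 'cV[R]_m) : relu_vec x - relu_vec (- x) = x.
Proof.
apply/matrixP => i j; rewrite !mxE; case: (leP 0 (x i j)) => h.
  by rewrite max_r ?oppr_le0 // subr0.
by rewrite max_l ?oppr_ge0 ?ltW // sub0r opprK.
Qed.

Lemma relu_net_widen W W' L d N (f : 'cV[R]_d -> 'cV[R]_N) :
  (W <= W')%N -> relu_net W L f -> relu_net W' L f.
Proof.
move=> le [L0 [A0 [b0 [hid [Aout [bout [sz Hf]]]]]]].
pose P : 'M[R]_(W', W) := pid_mx W.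
have PtP : P^T *m P = 1%:M by rewrite /P tr_pid_mx pid_mx_id // pid_mx_1.
split=> //; exists (P *m A0), (P *m b0), (map (fun p => (P *m p.1 *m P^T, P *m p.2)) hid),
  (Aout *m P^T), bout; split=> [|x]; first by rewrite size_map.
have embed h hs : foldl layer (P *m h) (map (fun p => (P *m p.1 *m P^T, P *m p.2)) hs) =
    P *m foldl layer h hs.
  elim: hs h => [|p hs IH] h //=; rewrite -IH.
  by rewrite -!mulmxA (mulmxA P^T) PtP mul1mx -mulmxDr relu_vec_pid_mx.
rewrite Hf -(mulmxA P A0 x) -mulmxDr relu_vec_pid_mx.
by rewrite embed mulmxA -(mulmxA Aout) PtP mulmx1.
Qed.

Lemma relu_net_comp W L1 L2 d m N (f : 'cV[R]_d -> 'cV[R]_m) (g : 'cV[R]_m -> 'cV[R]_N) :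
  relu_net W L1 f -> relu_net W L2 g -> relu_net W (L1 + L2) (g \o f).
Proof.
move=> [L10 [A0 [b0 [hid [Aout [bout [sz Hf]]]]]]].
move=> [L20 [A0' [b0' [hid' [Aout' [bout' [sz' Hg]]]]]]].
split; first by rewrite addn_gt0 L10.
exists A0, b0, (hid ++ (A0' *m Aout, A0' *m bout + b0') :: hid'), Aout', bout'.
split=> [|x]; first by rewrite size_cat /= sz sz'; lia.
by rewrite /= Hg Hf foldl_cat /= mulmxDr !mulmxA addrA.
Qed.

Lemma relu_net_col_mx W1 W2 L d m k (f : 'cV[R]_d -> 'cV[R]_m) (g : 'cV[R]_d -> 'cV[R]_k) :
  relu_net W1 L f -> relu_net W2 L g ->
  relu_net (W1 + W2) L (fun x => col_mx (f x) (g x)).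
Proof.
move=> [L0 [A0 [b0 [hid [Aout [bout [sz Hf]]]]]]].
move=> [_ [A0' [b0' [hid' [Aout' [bout' [sz' Hg]]]]]]].
pose blk (pq : ('M[R]_W1 * 'cV[R]_W1) * ('M[R]_W2 * 'cV[R]_W2)) :=
  (block_mx pq.1.1 0 0 pq.2.1, col_mx pq.1.2 pq.2.2).
split=> //; exists (col_mx A0 A0'), (col_mx b0 b0'), (map blk (zip hid hid')),
  (block_mx Aout 0 0 Aout'), (col_mx bout bout').
split=> [|x]; first by rewrite size_map size_zip sz sz' minnn.
have parallel hs hs' hu hd : size hs = size hs' ->
    foldl layer (col_mx hu hd) (map blk (zip hs hs')) =
    col_mx (foldl layer hu hs) (foldl layer hd hs').
  elim: hs hs' hu hd => [|p hs IH] [|p' hs'] hu hd //= [e]; rewrite -IH //.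
  by rewrite mul_block_col !mul0mx addr0 add0r add_col_mx relu_vec_col_mx.
rewrite Hf Hg [col_mx A0 A0' *m x]mul_col_mx add_col_mx relu_vec_col_mx parallel ?sz ?sz' //.
by rewrite mul_block_col !mul0mx addr0 add0r add_col_mx.
Qed.

Lemma relu_net_affine d N (A : 'M[R]_(N, d)) (b : 'cV[R]_N) :
  relu_net (d + d) 1 (fun x => A *m x + b).
Proof.
split=> //; exists (col_mx 1%:M (- 1%:M)), 0, [::], (row_mx A (- A)), b; split=> // x /=.
rewrite addr0 mul_col_mx mulNmx !mul1mx relu_vec_col_mx mul_row_col mulNmx -mulmxN.
by rewrite -mulmxDr relu_vec_sub.
Qed.

Lemma relu_net_relu N : relu_net N 1 (@relu_vec R N).
Proof.
by split=> //; exists 1%:M, 0, [::], 1%:M, 0; split=> // x /=; rewrite !mul1mx !addr0.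
Qed.

(* Each extra layer computes the identity as [relu x - relu (- x)], whence width [N + N]. *)
Lemma relu_net_deepen W L L' d N (f : 'cV[R]_d -> 'cV[R]_N) :
  (N + N <= W)%N -> (L <= L')%N -> relu_net W L f -> relu_net W L' f.
Proof.
move=> NW /subnK <-; elim: (L' - L)%N => [|k IH] Hf; first by rewrite add0n.
have Hid := relu_net_widen NW (relu_net_affine 1%:M (0 : 'cV[R]_N)).
have [L0 [A0 [b0 [hid [Ao [bo [sz H]]]]]]] := relu_net_comp (IH Hf) Hid.
split=> //; exists A0, b0, hid, Ao, bo; split=> [|x]; first by rewrite sz addn1.
by rewrite -H /= mul1mx addr0.
Qed.

Lemma relu_net_iter W L0 L d m (f : 'cV[R]_d -> 'cV[R]_m) (g : 'cV[R]_m -> 'cV[R]_m) k :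
  relu_net W L0 f -> relu_net W L g -> relu_net W (L0 + k * L) (fun x => iter k g (f x)).
Proof.
move=> Hf Hg; elim: k => [|k IH]; first by rewrite mul0n addn0.
by rewrite mulSn addnCA addnC; exact: relu_net_comp IH Hg.
Qed.

End ReluNetworks.

Section Realizable.
Variable R : realType.

Definition realizable d N (f : 'cV[R]_d -> 'cV[R]_N) := exists W L, relu_net W L f.

Definition realizable1 d (f : 'cV[R]_d -> R) := realizable (fun x => const_mx (f x) : 'cV_1).

Lemma realizable_comp d m N (f : 'cV[R]_d -> 'cV[R]_m) (g : 'cV[R]_m -> 'cV[R]_N) :
  realizable f -> realizable g -> realizable (g \o f).
Proof.
move=> [W1 [L1 Hf]] [W2 [L2 Hg]]; exists (maxn W1 W2), (L1 + L2)%N.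
by apply: relu_net_comp; [apply: relu_net_widen Hf | apply: relu_net_widen Hg]; lia.
Qed.

Lemma realizable_col_mx d m k (f : 'cV[R]_d -> 'cV[R]_m) (g : 'cV[R]_d -> 'cV[R]_k) :
  realizable f -> realizable g -> realizable (fun x => col_mx (f x) (g x)).
Proof.
move=> [W1 [L1 Hf]] [W2 [L2 Hg]].
pose W := maxn (maxn W1 W2) (maxn (m + m) (k + k)).
exists (W + W)%N, (maxn L1 L2); apply: relu_net_col_mx.
  by apply: relu_net_deepen (relu_net_widen _ Hf); rewrite ?leq_maxl // /W; lia.
by apply: relu_net_deepen (relu_net_widen _ Hg); rewrite ?leq_maxr // /W; lia.
Qed.

Lemma realizable_affine d N (A : 'M[R]_(N, d)) (b : 'cV[R]_N) :
  realizable (fun x => A *m x + b).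
Proof. by exists (d + d)%N, 1%N; apply: relu_net_affine. Qed.

Lemma realizable_relu N : realizable (@relu_vec R N).
Proof. by exists N, 1%N; apply: relu_net_relu. Qed.

Lemma realizable1_affine d (a : 'rV[R]_d) (c : R) :
  realizable1 (fun x => (a *m x) ord0 ord0 + c).
Proof.
rewrite /realizable1.
have -> : (fun x => const_mx ((a *m x) ord0 ord0 + c) : 'cV_1) = (fun x => a *m x + const_mx c).
  by apply/funext => x; apply/matrixP => i j; rewrite !ord1 !mxE.
exact: realizable_affine.
Qed.

Lemma realizable1_coord d (i : 'I_d) : realizable1 (fun x : 'cV[R]_d => x i ord0).
Proof.
have -> : (fun x : 'cV[R]_d => x i ord0) = (fun x => ((delta_mx 0 i : 'rV_d) *m x) ord0 ord0 + 0).
  by apply/funext => x; rewrite addr0 -rowE mxE.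
exact: realizable1_affine.
Qed.

Lemma realizable1_comp d m (f : 'cV[R]_d -> 'cV[R]_m) (g : 'cV[R]_m -> R) :
  realizable f -> realizable1 g -> realizable1 (g \o f).
Proof. exact: realizable_comp. Qed.

Lemma realizable_col d N (f : 'cV[R]_d -> 'cV[R]_N) :
  (forall i, realizable1 (fun x => f x i ord0)) -> realizable f.
Proof.
elim: N f => [|N IH] f Hf.
  have -> : f = (fun x => 0 *m x + 0) by apply/funext => x; apply/matrixP => [[]].
  exact: realizable_affine.
have -> : f = fun x => col_mx (const_mx (f x ord0 ord0) : 'cV_1) (dsubmx (f x : 'cV_(1 + N))).
  apply/funext => x; apply/matrixP => i j; rewrite !mxE ord1.
  by case: splitP => k ik; rewrite !mxE; congr (f x _ _); apply: val_inj; rewrite /= ik ?ord1.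
apply: (@realizable_col_mx d 1 N); first exact: Hf.
by apply: IH => i; have := Hf (rshift 1 i); congr realizable1; apply/funext => x; rewrite mxE.
Qed.

Lemma realizable_vec2 d (f g : 'cV[R]_d -> R) :
  realizable1 f -> realizable1 g -> realizable (fun x => vec2 (f x) (g x)).
Proof.
move=> Hf Hg; apply: realizable_col => -[[|[|//]] i2].
  by have -> : (fun x => vec2 (f x) (g x) (Ordinal i2) ord0) = f by apply/funext => x; rewrite mxE.
by have -> : (fun x => vec2 (f x) (g x) (Ordinal i2) ord0) = g by apply/funext => x; rewrite mxE.
Qed.

Lemma realizable1_cst d (c : R) : realizable1 (fun _ : 'cV[R]_d => c).
Proof.
have -> : (fun _ : 'cV[R]_d => c) = fun x => ((0 : 'rV_d) *m x) ord0 ord0 + c.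
  by apply/funext => x; rewrite mul0mx mxE add0r.
exact: realizable1_affine.
Qed.

Lemma realizable1_add d (f g : 'cV[R]_d -> R) :
  realizable1 f -> realizable1 g -> realizable1 (fun x => f x + g x).
Proof.
move=> Hf Hg; have -> : (fun x => f x + g x) =
    (fun z => ((const_mx 1 : 'rV_2) *m z) ord0 ord0 + 0) \o (fun x => vec2 (f x) (g x)).
  by apply/funext => x /=; rewrite !mxE !big_ord_recr big_ord0 /= !mxE add0r addr0 !mul1r.
exact: realizable1_comp (realizable_vec2 Hf Hg) (realizable1_affine _ _).
Qed.

Lemma realizable1_scale d (a : R) (f : 'cV[R]_d -> R) :
  realizable1 f -> realizable1 (fun x => a * f x).
Proof.
rewrite /realizable1 => Hf; have -> : (fun x => const_mx (a * f x) : 'cV_1) =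
    (fun z => a%:M *m z + 0) \o (fun x => const_mx (f x)).
  by apply/funext => x /=; rewrite addr0 mul_scalar_mx; apply/matrixP => i j; rewrite !mxE.
exact: realizable_comp Hf (realizable_affine _ _).
Qed.

Lemma realizable1_opp d (f : 'cV[R]_d -> R) : realizable1 f -> realizable1 (fun x => - f x).
Proof.
have -> : (fun x => - f x) = (fun x => -1 * f x) by apply/funext => x; rewrite mulN1r.
exact: realizable1_scale.
Qed.

Lemma realizable1_max0 d (f : 'cV[R]_d -> R) :
  realizable1 f -> realizable1 (fun x => Num.max (f x) 0).
Proof.
rewrite /realizable1 => Hf; have -> : (fun x => const_mx (Num.max (f x) 0) : 'cV_1) =
    @relu_vec R 1 \o (fun x => const_mx (f x)).
  by apply/funext => x; apply/matrixP => i j; rewrite !mxE.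
exact: realizable_comp Hf (realizable_relu 1).
Qed.

Lemma realizable1_min d (f g : 'cV[R]_d -> R) :
  realizable1 f -> realizable1 g -> realizable1 (fun x => Num.min (f x) (g x)).
Proof.
move=> Hf Hg; have -> : (fun x => Num.min (f x) (g x)) =
    (fun x => f x + - Num.max (f x + - g x) 0).
  apply/funext => x; case: (leP (f x) (g x)) => h; first by rewrite max_r ?subr_le0 // subr0.
  by rewrite max_l ?subr_ge0 ?ltW // opprB addrC subrK.
exact: realizable1_add Hf
  (realizable1_opp (realizable1_max0 (realizable1_add Hf (realizable1_opp Hg)))).
Qed.

Lemma realizable1_max d (f g : 'cV[R]_d -> R) :
  realizable1 f -> realizable1 g -> realizable1 (fun x => Num.max (f x) (g x)).
Proof.
move=> Hf Hg; have -> : (fun x => Num.max (f x) (g x)) =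
    (fun x => f x + Num.max (g x + - f x) 0).
  apply/funext => x; case: (leP (f x) (g x)) => h; first by rewrite max_l ?subr_ge0 // addrC subrK.
  by rewrite max_r ?subr_le0 ?ltW // addr0.
exact: realizable1_add Hf (realizable1_max0 (realizable1_add Hg (realizable1_opp Hf))).
Qed.

Lemma realizable1_bigmin d (I : Type) (r : seq I) (P : pred I)
    (F : I -> 'cV[R]_d -> R) (G : 'cV[R]_d -> R) :
  realizable1 G -> (forall i, realizable1 (F i)) ->
  realizable1 (fun x => \big[Num.min/G x]_(i <- r | P i) F i x).
Proof.
move=> HG HF; elim: r => [|i r IH].
  by have -> : (fun x => \big[Num.min/G x]_(i <- [::] | P i) F i x) = G
    by apply/funext => x; rewrite big_nil.
have -> : (fun x => \big[Num.min/G x]_(j <- i :: r | P j) F j x) =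
    if P i then fun x => Num.min (F i x) (\big[Num.min/G x]_(j <- r | P j) F j x)
    else fun x => \big[Num.min/G x]_(j <- r | P j) F j x.
  by apply/funext => x; rewrite big_cons; case: (P i).
by case: (P i) => //; apply: realizable1_min.
Qed.

Lemma realizable1_bigmax d (I : Type) (r : seq I) (P : pred I)
    (F : I -> 'cV[R]_d -> R) (G : 'cV[R]_d -> R) :
  realizable1 G -> (forall i, realizable1 (F i)) ->
  realizable1 (fun x => \big[Num.max/G x]_(i <- r | P i) F i x).
Proof.
move=> HG HF; elim: r => [|i r IH].
  by have -> : (fun x => \big[Num.max/G x]_(i <- [::] | P i) F i x) = G
    by apply/funext => x; rewrite big_nil.
have -> : (fun x => \big[Num.max/G x]_(j <- i :: r | P j) F j x) =
    if P i then fun x => Num.max (F i x) (\big[Num.max/G x]_(j <- r | P j) F j x)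
    else fun x => \big[Num.max/G x]_(j <- r | P j) F j x.
  by apply/funext => x; rewrite big_cons; case: (P i).
by case: (P i) => //; apply: realizable1_max.
Qed.

Lemma realizable_usubmx m k : realizable (fun z : 'cV[R]_(m + k) => usubmx z).
Proof.
have -> : (fun z : 'cV[R]_(m + k) => usubmx z) = fun z => row_mx 1%:M 0 *m z + 0.
  by apply/funext => z; rewrite -[z in RHS]vsubmxK mul_row_col mul1mx mul0mx !addr0.
exact: realizable_affine.
Qed.

Lemma realizable_dsubmx m k : realizable (fun z : 'cV[R]_(m + k) => dsubmx z).
Proof.
have -> : (fun z : 'cV[R]_(m + k) => dsubmx z) = fun z => row_mx 0 1%:M *m z + 0.
  by apply/funext => z; rewrite -[z in RHS]vsubmxK mul_row_col mul1mx mul0mx add0r addr0.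
exact: realizable_affine.
Qed.

Lemma realizable_iter_uniform_width d m N (f : 'cV[R]_d -> 'cV[R]_m)
    (g : 'cV[R]_m -> 'cV[R]_m) (h : 'cV[R]_m -> 'cV[R]_N) :
  realizable f -> realizable g -> realizable h ->
  exists C0 C1 : nat, [/\ (0 < C0)%N, (0 < C1)%N &
    forall n, (1 <= n)%N -> relu_net C0 (C1 * n) (fun x => h (iter n g (f x)))].
Proof.
move=> [W1 [L1 Hf]] [W2 [L2 Hg]] [W3 [L3 Hh]].
pose W := maxn (maxn W1 W2) (maxn W3 (N + N).+1).
have [L1_gt0 _] := Hf.
have [W1W W2W W3W] : [/\ (W1 <= W)%N, (W2 <= W)%N & (W3 <= W)%N] by split; lia.
exists W, (L1 + L2 + L3)%N; split=> [||n n_ge1]; [lia | lia |].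
apply: relu_net_deepen (_ : (L1 + n * L2 + L3 <= _)%N) _; [lia | nia |].
exact: relu_net_comp (relu_net_iter n (relu_net_widen W1W Hf) (relu_net_widen W2W Hg))
  (relu_net_widen W3W Hh).
Qed.

End Realizable.

Section OneDimensional.
Variable R : realType.

Lemma pigeonhole_frequently_right (T : eqType) (s : seq T) (P : T -> R -> Prop) :
  (forall e, 0 < e -> exists2 q, q \in s & exists2 h, 0 < h < e & P q h) ->
  exists2 q, q \in s & forall e, 0 < e -> exists2 h, 0 < h < e & P q h.
Proof.
elim: s => [|q0 s IH] Hs; first by have [q] := Hs 1 ltr01.
case: (pselect (forall e, 0 < e -> exists2 h, 0 < h < e & P q0 h)) => [Hq0|Nq0].
  by exists q0; rewrite ?mem_head.
have [e0 e0_gt0 He0] : exists2 e0, 0 < e0 & forall h, 0 < h < e0 -> ~ P q0 h.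
  apply: contrapT => Ne0; apply: Nq0 => e e_gt0; apply: contrapT => Ne.
  by apply: Ne0; exists e => // h he Ph; apply: Ne; exists h.
have [q qs Hq] : exists2 q, q \in s & forall e, 0 < e -> exists2 h, 0 < h < e & P q h.
  apply: IH => e e_gt0; have [|q] := Hs (Num.min e e0); first by rewrite lt_min e_gt0.
  rewrite in_cons => /orP[/eqP->|qs] [h /andP[h0]]; rewrite lt_min => /andP[he he0] Ph.
    by have := He0 h; rewrite h0 he0 => /(_ isT).
  by exists q => //; exists h; rewrite ?h0.
by exists q; rewrite // in_cons qs orbT.
Qed.

Lemma closure_frequently_right (A : set R) (u : R) :
  (forall e, 0 < e -> exists2 h, 0 < h < e & A (u + h)) -> closure A u.
Proof.
move=> HA B /nbhs_ballP[e e_gt0 HB]; have [h /andP[h0 he] Ah] := HA e e_gt0.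
exists (u + h); split=> //; apply: HB.
by rewrite /ball /= opprD addNKr normrN gtr0_norm.
Qed.

Lemma closed_fun_le (f g : R -> R) :
  continuous f -> continuous g -> closed [set t | f t <= g t].
Proof.
move=> fc gc; have -> : [set t | f t <= g t] = (fun t => g t - f t) @^-1` [set x | 0 <= x].
  by apply/seteqP; split=> t /=; rewrite subr_ge0.
apply: preimage_closed; last exact: closed_ge.
by move=> t _; exact: (continuousB (gc t) (fc t)).
Qed.

Lemma closed_fun_eq (f g : R -> R) :
  continuous f -> continuous g -> closed [set t | f t = g t].
Proof.
move=> fc gc; have -> : [set t | f t = g t] = [set t | f t <= g t] `&` [set t | g t <= f t].
  by apply/seteqP; split=> t /=; [move=> ->|case=> *; apply/eqP; rewrite eq_le; apply/andP].
by apply: closedI; apply: closed_fun_le.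
Qed.

Lemma cpwl1_piece_above_below (phi : R -> R) (s : seq (R * R)) :
  continuous phi ->
  (forall t, 0 <= t <= 1 -> exists2 q, q \in s & phi t = q.1 + t * q.2) ->
  exists2 q, q \in s & phi 0 <= q.1 /\ q.1 + q.2 <= phi 1.
Proof.
move=> phic Hs.
pose a (q : R * R) t := q.1 + t * q.2.
have ac q : continuous (a q).
  by move=> t; apply: cvgD; [exact: cvg_cst | apply: cvgM; [exact: cvg_id | exact: cvg_cst]].
(* [u = sup A] is attained since [A] is closed; if [u < 1], a piece active at points
   accumulating at [u] from the right puts a point beyond [u] into [A]. *)
pose A := [set t | 0 <= t] `&` [set t | t <= 1] `&`
  \bigcup_(q in [set q | (q \in s) && (phi 0 <= q.1)]) [set t | a q t <= phi t].
have A_closed : closed A.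
  apply: closedI; first by apply: closedI; [exact: closed_ge | exact: closed_le].
  by rewrite bigcup_seq_cond -big_filter; apply: closed_bigsetU => q _; apply: closed_fun_le.
have A0 : A 0.
  have [q qs q0] := Hs 0 (ltac:(by rewrite lexx ler01)).
  rewrite /A; split; first by split; rewrite /= ?ler01.
  by exists q; rewrite /= /a ?qs q0 ?mul0r ?addr0 lexx.
have hsA : has_sup A by split; [exists 0 | exists 1 => t [[]]].
pose u := sup A.
have Au : A u by rewrite (closure_id A).1 //; apply: closure_sup; case: hsA.
have [[u0 u1] [q /andP[qs q0] qu]] := Au; rewrite /= in u0 u1 qu.
case: (ltrP u 1) => [ult1|u1']; last first.
  have u_eq1 : u = 1 by apply/eqP; rewrite eq_le u1 u1'.
  by exists q => //; move: qu; rewrite u_eq1 /a mul1r.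
have [k ks Hk] : exists2 k, k \in s & forall e, 0 < e ->
    exists2 h, 0 < h < e & u + h <= 1 /\ phi (u + h) = a k (u + h).
  apply: pigeonhole_frequently_right => e e_gt0.
  have m_e : Num.min e (1 - u) <= e by rewrite ge_min lexx.
  have m_u : Num.min e (1 - u) <= 1 - u by rewrite ge_min lexx orbT.
  have m_gt0 : 0 < Num.min e (1 - u) by rewrite lt_min e_gt0 subr_gt0.
  set h := Num.min e (1 - u) / 2.
  have [k ks Hk] := Hs (u + h) ltac:(apply/andP; split; rewrite /h; lra).
  by exists k => //; exists h; [apply/andP; split; rewrite /h; lra | split => //; rewrite /h; lra].
have ku : phi u = a k u.
  have : closure [set t | phi t = a k t] u.
    by apply: closure_frequently_right => e /Hk[h h0 [_ Hh]]; exists h.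
  by rewrite -(closure_id _).1 //; apply: closed_fun_eq.
have [h /andP[h_gt0 _] [uh1 Hkh]] := Hk 1 ltr01.
suff Auh : A (u + h) by have := sup_upper_bound hsA Auh; rewrite -/u; lra.
split; first by rewrite /=; split; lra.
case: (leP (phi 0) k.1) => k0.
  by exists k; rewrite /= ?ks ?k0 ?Hkh.
exists q; rewrite /= ?qs ?q0 // Hkh.
move: qu; rewrite ku /a => qu; nra.
Qed.

End OneDimensional.

Section LatticeRepresentation.
Variable R : realType.

Definition affine d (p : 'rV[R]_d * R) (x : 'cV[R]_d) := (p.1 *m x) ord0 ord0 + p.2.

Lemma affine_segment d (p : 'rV[R]_d * R) x w t :
  affine p (x + t *: w) = affine p x + t * (p.1 *m w) ord0 ord0.
Proof. by rewrite /affine mulmxDr -scalemxAr !mxE; ring. Qed.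

Lemma cpwl_piece_above_below d (f : 'cV[R]_d -> R) (s : seq ('rV[R]_d * R)) :
  continuous f -> (forall x, exists2 p, p \in s & f x = affine p x) ->
  forall x y, exists2 p, p \in s & f x <= affine p x /\ affine p y <= f y.
Proof.
move=> fc Hs x y.
pose seg t := x + t *: (y - x).
have seg1 : seg 1 = y by rewrite /seg scale1r addrC subrK.
pose restrict (p : 'rV[R]_d * R) := (affine p x, (p.1 *m (y - x)) ord0 ord0).
have seg_cont : continuous (f \o seg).
  move=> t; apply: continuous_comp; last exact: fc.
  by apply: cvgD; [exact: cvg_cst | apply: cvgZr_tmp; exact: cvg_id].
have seg_pieces t : 0 <= t <= 1 ->
    exists2 q, q \in map restrict s & f (seg t) = q.1 + t * q.2.
  move=> _; have [p ps /= ->] := Hs (seg t).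
  by exists (restrict p); [exact: map_f | rewrite affine_segment].
have [_ /mapP[p ps ->] []] := cpwl1_piece_above_below seg_cont seg_pieces.
rewrite /= /seg scale0r addr0 => fx fy; exists p => //; split=> //.
by rewrite -seg1 affine_segment mul1r.
Qed.

Fixpoint subseqs (T : Type) (s : seq T) : seq (seq T) :=
  if s is x :: s' then subseqs s' ++ map (cons x) (subseqs s') else [:: [::]].

Lemma filter_subseqs (T : eqType) (P : pred T) (s : seq T) :
  [seq x <- s | P x] \in subseqs s.
Proof.
elim: s => [|x s IH] /=; first by rewrite mem_seq1.
by case: (P x); rewrite mem_cat ?IH // (map_f _ IH) orbT.
Qed.

(* Max-min (lattice) representation: [f] is the maximum over [x] of the minimum of the
   pieces lying above [f] at [x]; only finitely many such sets of pieces occur. *)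
Lemma cpwl_realizable1 d (f : 'cV[R]_d -> R) : cpwl f -> realizable1 f.
Proof.
move=> [fc [s Hs]].
pose active x := [seq p <- s | f x <= affine p x].
pose lower (S : seq ('rV[R]_d * R)) y := \big[Num.min/affine (head (0, 0) S) y]_(p <- S) affine p y.
have lower_le x y : lower (active x) y <= f y.
  have [p ps [fx fy]] := cpwl_piece_above_below fc Hs x y.
  by apply: (bigmin_inf_seq _ p xpredT (f y) (fun q => affine q y)) fy => //; rewrite mem_filter fx.
have lower_ge y : f y <= lower (active y) y.
  have [p ps fp] := Hs y.
  have : p \in active y by rewrite mem_filter /affine -fp lexx.
  rewrite /lower big_seq; case E: (active y) => [//|p0 S] _.
  have above q : q \in p0 :: S -> f y <= affine q y by rewrite -E mem_filter => /andP[].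
  by apply: le_bigmin => [|q /above //]; apply/above/mem_head.
pose below S := `[< forall y, lower S y <= f y >].
have -> : f = fun y => \big[Num.max/lower (active 0) y]_(S <- subseqs s | below S) lower S y.
  apply/funext => y; apply/eqP; rewrite eq_le; apply/andP; split.
    apply: (bigmax_sup_seq _ (active y) below (f y) (fun S => lower S y)) (lower_ge y).
      exact: filter_subseqs.
    by apply/asboolP => z; apply: lower_le.
  by apply: bigmax_le => // S /asboolP.
apply: realizable1_bigmax => [|S]; apply: realizable1_bigmin => *; exact: realizable1_affine.
Qed.

Lemma cpwl_vec_realizable d N (F : 'cV[R]_d -> 'cV[R]_N) : cpwl_vec F -> realizable F.
Proof. by move=> HF; apply: realizable_col => i; exact: cpwl_realizable1. Qed.

End LatticeRepresentation.

Lemma iter_semiconj (A B : Type) (P : A -> Prop) (r : A -> A) (E : A -> B) (F : B -> B) :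
  (forall t, P t -> P (r t)) -> (forall t, P t -> F (E t) = E (r t)) ->
  forall n t, P t -> iter n F (E t) = E (iter n r t).
Proof.
move=> Pr FE n t Pt; have Pn k : P (iter k r t) by elim: k => //= k; apply: Pr.
by elim: n => //= n ->; apply: FE.
Qed.

Section SpecialAtoms.
Variable R : realType.

Lemma rmap_in01 (t : R) : 0 <= t <= 1 -> 0 <= rmap t <= 1.
Proof.
move=> /andP[t0 t1]; rewrite /rmap; case: eqP => [_|_]; first by rewrite ler01 lexx.
have := floor_le (2 * t); have : 2 * t < (Num.floor (2 * t) + 1)%:~R.
  by rewrite -floor_lt_int ltrDl.
by rewrite intrD; lra.
Qed.

Definition outside (vr a : R) := a < vr \/ 1 - vr < a.

Definition recovers (vr u a1 a2 : R) :=
  (a1 = u /\ a2 = u) \/ ((a1 = u \/ a2 = u) /\ outside vr u).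

Definition min4 (h : R -> R -> R) (a1 a2 b1 b2 : R) :=
  Num.min (Num.min (h a1 b1) (h a1 b2)) (Num.min (h a2 b1) (h a2 b2)).

Lemma special_atom_outside (vr a b : R) (H : 'cV[R]_2 -> R) : special_atom vr H ->
  outside vr a \/ outside vr b -> H (vec2 a b) = 0.
Proof.
move=> [_ [_ [_ suppH]]] ab; apply: contrapT => /eqP Hab.
have [] := suppH (vec2 a b) (@subset_closure _ [set z | H z != 0] _ Hab); rewrite !mxE /=.
by case: ab => -[]; lra.
Qed.

(* Where a candidate is wrong, [u] lies outside the support, so both sides vanish. *)
Lemma min4_recovers (h : R -> R -> R) (vr u v a1 a2 b1 b2 : R) :
  (forall a b, 0 <= h a b) -> (forall a b, outside vr a \/ outside vr b -> h a b = 0) ->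
  recovers vr u a1 a2 -> recovers vr v b1 b2 -> h u v = min4 h a1 a2 b1 b2.
Proof.
move=> h_ge0 h_out ha hb; have min4_ge0 c1 c2 d1 d2 : 0 <= min4 h c1 c2 d1 d2.
  by rewrite !le_min !h_ge0.
case: ha => [[-> ->]|[ha u_out]].
  case: hb => [[-> ->]|[hb v_out]]; first by rewrite /min4 !minxx.
  have hv0 w : h w v = 0 by apply: h_out; right.
  rewrite hv0; apply/eqP; rewrite eq_le min4_ge0 /min4.
  by case: hb => ->; rewrite !ge_min !hv0 lexx ?orbT.
have hu0 w : h u w = 0 by apply: h_out; left.
rewrite hu0; apply/eqP; rewrite eq_le min4_ge0 /min4.
by case: ha => ->; rewrite !ge_min !hu0 lexx ?orbT.
Qed.

Lemma one_sided_inverses_recover (eps vr : R) (rm rp : R -> R) :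
  eps < vr -> vr < 2^-1 ->
  (forall t, eps <= t <= 1 -> rm t = t) -> (forall t, 0 <= t <= 1 - eps -> rp t = t) ->
  forall u, 0 <= u <= 1 -> recovers vr u (rm u) (rp u).
Proof.
move=> eps_vr vr_half rmE rpE u /andP[u0 u1].
case: (ltP u eps) => [u_eps|eps_u].
  by right; split; [right; apply: rpE; apply/andP; split; lra | left; lra].
case: (ltP (1 - eps) u) => [u_eps'|u_eps'].
  by right; split; [left; apply: rmE; apply/andP; split; lra | right; lra].
by left; split; [apply: rmE | apply: rpE]; apply/andP; split.
Qed.

Lemma Emap_relu (t : R) : Emap t =
  vec2 (3 * t - 3 * Num.max (t - 3^-1) 0 - 3 * Num.max (t - 2 / 3) 0)
       (3 * t - 6 * Num.max (t - 3^-1) 0 + 3 * Num.max (t - 2 / 3) 0).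
Proof.
have h3 : 3 * 3^-1 = 1 :> R by rewrite mulfV.
rewrite /Emap -[2 / 3]/(2 * 3^-1).
case: (lerP t 3^-1) => t1; first by rewrite !max_r; [congr vec2; lra | lra | lra].
case: (lerP t (2 * 3^-1)) => t2; first by rewrite max_l ?max_r; [congr vec2; lra | lra | lra].
by rewrite !max_l; [congr vec2; lra | lra | lra].
Qed.

Lemma realizable_Emap_coord d (i : 'I_d) : realizable (fun v : 'cV[R]_d => Emap (v i ord0)).
Proof.
under eq_fun do rewrite Emap_relu.
have vi := realizable1_coord R i.
have relu_shift c : realizable1 (fun v : 'cV[R]_d => Num.max (v i ord0 - c) 0).
  exact: realizable1_max0 (realizable1_add vi (realizable1_opp (realizable1_cst d c))).
apply: realizable_vec2; do !apply: realizable1_add;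
  by do ?[apply: realizable1_opp]; apply: realizable1_scale.
Qed.

Lemma realizable1_min4 d (h : 'cV[R]_2 -> R) (a1 a2 b1 b2 : 'cV[R]_d -> R) :
  realizable1 h -> realizable1 a1 -> realizable1 a2 -> realizable1 b1 -> realizable1 b2 ->
  realizable1 (fun x => min4 (fun a b => h (vec2 a b)) (a1 x) (a2 x) (b1 x) (b2 x)).
Proof.
move=> Hh Ha1 Ha2 Hb1 Hb2.
have Hab (a b : 'cV[R]_d -> R) : realizable1 a -> realizable1 b ->
    realizable1 (fun x => h (vec2 (a x) (b x))).
  by move=> Ha Hb; exact: realizable1_comp (realizable_vec2 Ha Hb) Hh.
by apply: realizable1_min; apply: realizable1_min; apply: Hab.
Qed.

Lemma iter_col_mx m (F : 'cV[R]_m -> 'cV[R]_m) n (a b : 'cV[R]_m) :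
  iter n (fun z : 'cV[R]_(m + m) => col_mx (F (usubmx z)) (F (dsubmx z))) (col_mx a b) =
  col_mx (iter n F a) (iter n F b).
Proof. by elim: n => //= n ->; rewrite col_mxKu col_mxKd. Qed.

End SpecialAtoms.

Lemma special_atom_iter_rmap (R : realType) (epsb varrho : R)
    (H rhom rhop : 'cV[R]_2 -> R) (F : 'cV[R]_2 -> 'cV[R]_2) :
  epsb < varrho -> varrho < 2^-1 -> special_atom varrho H ->
  (forall t, epsb <= t <= 1 -> rhom (Emap t) = t) ->
  (forall t, 0 <= t <= 1 - epsb -> rhop (Emap t) = t) ->
  (forall t, 0 <= t <= 1 -> F (Emap t) = Emap (rmap t)) ->
  forall n x y, 0 <= x <= 1 -> 0 <= y <= 1 ->
  H (vec2 (iter n (@rmap R) x) (iter n (@rmap R) y)) =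
    min4 (fun a b => H (vec2 a b)) (rhom (iter n F (Emap x))) (rhop (iter n F (Emap x)))
                                   (rhom (iter n F (Emap y))) (rhop (iter n F (Emap y))).
Proof.
move=> eps_vr vr_half HH rhomE rhopE FE n x y x01 y01.
have iter_in01 t : 0 <= t <= 1 -> 0 <= iter n (@rmap R) t <= 1.
  by move=> t01; elim: n => //= n; apply: rmap_in01.
have rec := one_sided_inverses_recover (rm := rhom \o @Emap R) (rp := rhop \o @Emap R)
  eps_vr vr_half rhomE rhopE.
have [_ [H_ge0 _]] := HH.
rewrite !(iter_semiconj (@rmap_in01 R) FE) //.
apply: (min4_recovers (vr := varrho)) => [a b|a b||]; first exact: H_ge0.
- exact: special_atom_outside HH.
- exact/rec/iter_in01.
- exact/rec/iter_in01.
Qed.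

Lemma relu_net_min4_iter (R : realType) (H rhom rhop : 'cV[R]_2 -> R)
    (F : 'cV[R]_2 -> 'cV[R]_2) :
  cpwl H -> cpwl rhom -> cpwl rhop -> cpwl_vec F ->
  exists C0 C1 : nat, [/\ (0 < C0)%N, (0 < C1)%N & forall n, (1 <= n)%N ->
    relu_net C0 (C1 * n) (fun v : 'cV[R]_2 => const_mx (min4 (fun a b => H (vec2 a b))
      (rhom (iter n F (Emap (v ord0 ord0)))) (rhop (iter n F (Emap (v ord0 ord0))))
      (rhom (iter n F (Emap (v (lift ord0 ord0) ord0))))
      (rhop (iter n F (Emap (v (lift ord0 ord0) ord0))))) : 'cV_1)].
Proof.
move=> HH Hm Hp HF.
pose embed (v : 'cV[R]_2) := col_mx (Emap (v ord0 ord0)) (Emap (v (lift ord0 ord0) ord0)).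
pose step (z : 'cV[R]_(2 + 2)) := col_mx (F (usubmx z)) (F (dsubmx z)).
pose readout (z : 'cV[R]_(2 + 2)) := const_mx (min4 (fun a b => H (vec2 a b))
  (rhom (usubmx z)) (rhop (usubmx z)) (rhom (dsubmx z)) (rhop (dsubmx z))) : 'cV_1.
have Rembed : realizable embed.
  exact: realizable_col_mx (realizable_Emap_coord R ord0)
                           (realizable_Emap_coord R (lift ord0 ord0)).
have Rstep : realizable step.
  have RF := cpwl_vec_realizable HF.
  exact: realizable_col_mx (realizable_comp (realizable_usubmx R 2 2) RF)
                           (realizable_comp (realizable_dsubmx R 2 2) RF).
have Rreadout : realizable readout.
  have Rhalf rho (half : 'cV[R]_(2 + 2) -> 'cV[R]_2) :
      cpwl rho -> realizable half -> realizable1 (rho \o half).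
    by move=> /cpwl_realizable1 Hrho Hhalf; exact: realizable1_comp Hhalf Hrho.
  apply: (realizable1_min4 (cpwl_realizable1 HH)); apply: Rhalf => //;
    first [exact: realizable_usubmx | exact: realizable_dsubmx].
have [C0 [C1 [C0_gt0 C1_gt0 net]]] := realizable_iter_uniform_width Rembed Rstep Rreadout.
exists C0, C1; split=> // n n_ge1; have := net n n_ge1.
by congr relu_net; apply/funext => v; rewrite /readout iter_col_mx col_mxKu col_mxKd.
Qed.

Theorem mainTheorem8 (R : realType) (epsb varrho : R)
  (H : 'cV[R]_2 -> R) (rhom rhop : 'cV[R]_2 -> R) (F : 'cV[R]_2 -> 'cV[R]_2) :
  0 < epsb -> epsb < varrho -> varrho < 2^-1 ->
  special_atom varrho H ->
  cpwl rhom -> (forall z, 0 <= rhom z <= 1) ->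
  cpwl rhop -> (forall z, 0 <= rhop z <= 1) ->
  (forall t, epsb <= t <= 1 -> rhom (Emap t) = t) ->
  (forall t, 0 <= t <= 1 - epsb -> rhop (Emap t) = t) ->
  cpwl_vec F ->
  (forall t, 0 <= t <= 1 -> F (Emap t) = Emap (rmap t)) ->
  (forall (n : nat) (x y : R), (1 <= n)%N -> 0 <= x <= 1 -> 0 <= y <= 1 ->
     let z1 := iter n F (Emap x) in
     let z2 := iter n F (Emap y) in
     H (vec2 (iter n (@rmap R) x) (iter n (@rmap R) y)) =
       Num.min (Num.min (H (vec2 (rhom z1) (rhom z2))) (H (vec2 (rhom z1) (rhop z2))))
               (Num.min (H (vec2 (rhop z1) (rhom z2))) (H (vec2 (rhop z1) (rhop z2))))) /\
  (exists C0 C1 : nat, (0 < C0)%N /\ (0 < C1)%N /\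
     forall n : nat, (1 <= n)%N ->
       exists Phi : 'cV[R]_2 -> 'cV[R]_1,
         relu_net C0 (C1 * n) Phi /\
         forall x y : R, 0 <= x <= 1 -> 0 <= y <= 1 ->
           Phi (vec2 x y) ord0 ord0 = H (vec2 (iter n (@rmap R) x) (iter n (@rmap R) y))).
Proof.
move=> _ eps_vr vr_half HH Hm _ Hp _ rhomE rhopE HF FE.
have min4E := special_atom_iter_rmap eps_vr vr_half HH rhomE rhopE FE.
split=> [n x y _|]; first exact: min4E.
have [C0 [C1 [C0_gt0 C1_gt0 net]]] := relu_net_min4_iter (proj1 HH) Hm Hp HF.
exists C0, C1; do 2!split=> //; move=> n n_ge1; eexists; split; first exact: net.
by move=> x y x01 y01; rewrite !mxE /= min4E.
Qed.
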